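(* Let $n,m\ge1$. Let $A\in\mathbb{R}^{n\times nm}$ and $C\in\mathbb{R}^{m\times nm}$ be random matrices. Let $D\in\mathbb{R}^{nm\times nm}$ be a fixed diagonal matrix with all diagonal entries nonzero, and let $w\in\mathbb{R}^{nm}$ be a fixed nonzero vector. Set $B=(AD)\odot C\in\mathbb{R}^{nm\times nm}$. Then, with probability $1$, $B$ is invertible and, for every $i\in[nm]$, $\langle (B^{-1})_i,w\rangle\neq0$, where $(B^{-1})_i$ denotes the $i$-th row of $B^{-1}$.
   Context: ''Random'' matrices have independent, identically distributed entries drawn from a continuous distribution, independently of each other. For $A\in\mathbb{R}^{n\times N}$ and $C\in\mathbb{R}^{m\times N}$, the Khatri–Rao product $A\odot C\in\mathbb{R}^{nm\times N}$ is the matrix whose $k$-th column is the Kronecker product $A_k\otimes C_k$ of the $k$-th columns of $A$ and $C$. *)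

From HB Require Import structures.
From mathcomp Require Import all_boot all_order all_algebra.
From mathcomp Require Import all_classical all_reals all_analysis.
Set Implicit Arguments. Unset Strict Implicit. Unset Printing Implicit Defensive.
Import Order.TTheory GRing.Theory Num.Theory.
Local Open Scope ring_scope.
Local Open Scope classical_set_scope.

(* Row index r of 'I_(n*m) corresponds to the pair (i,j) with r = i*m + j
   (lexicographic order, the Kronecker-product convention; same indexing as
   mathcomp's mxvec_index). *)
Definition kr_pair (n m : nat) (r : 'I_(n * m)) : 'I_n * 'I_m :=
  enum_val (cast_ord (esym (mxvec_cast n m)) r).

(* Khatri-Rao product: column k of (A ⊙ C) is A_k ⊗ C_k. *)
Definition khatri_rao (R : pzRingType) (n m N : nat)
    (A : 'M[R]_(n, N)) (C : 'M[R]_(m, N)) : 'M[R]_(n * m, N) :=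
  \matrix_(r < n * m, k < N) (A (kr_pair r).1 k * C (kr_pair r).2 k).

Definition mutually_independent {d} (T : measurableType d) (R : realType)
    (P : probability T R) (I : finType) (X : I -> T -> R) : Prop :=
  forall B : I -> set R, (forall i, measurable (B i)) ->
    P (\bigcap_(i in [set: I]) (X i @^-1` B i)) =
    (\prod_(i : I) P (X i @^-1` B i))%E.

Definition same_law {d} (T : measurableType d) (R : realType)
    (P : probability T R) (X Y : T -> R) : Prop :=
  forall B : set R, measurable B -> P (X @^-1` B) = P (Y @^-1` B).

Definition continuous_law {d} (T : measurableType d) (R : realType)
    (P : probability T R) (X : T -> R) : Prop :=
  forall x : R, P (X @^-1` [set x]) = 0%E.

From HB Require Import structures.
From mathcomp Require Import all_boot all_order all_algebra perm polyrcf.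
From mathcomp Require Import all_classical all_reals all_analysis.
Set Implicit Arguments. Unset Strict Implicit. Unset Printing Implicit Defensive.
Import Order.TTheory GRing.Theory Num.Theory.
Local Open Scope ring_scope.
Local Open Scope classical_set_scope.

(* Every entry of B = (AD) ⊙ C, hence det B and every cofactor sum
   \sum_k adj(B)_ik w_k, is a polynomial in the entries of A and C.  Since
   adj B = det B · B^-1, it suffices that each of these polynomials is almost
   surely nonzero, and this follows from two facts.

   1. A polynomial that is not identically zero vanishes with probability 0
      at a vector of independent random variables with atomless laws.  By
      induction on the number of variables: write f = \sum_j c_j x_k^j with
      coefficients c_j in x_0..x_{k-1}; the event {f = 0} is covered by
      {c_j0 = 0}, null by induction, and {f = 0, c_j0 ≠ 0}, null by Fubini,
      since the joint law of (x_0..x_{k-1}) and the independent x_k is a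
      product measure and a nonzero univariate polynomial has finitely many
      roots, each of mass 0 for the atomless law of x_k.

   2. None of the polynomials is identically zero: for a permutation s with
      s i = r0, where w_r0 ≠ 0, suitable 0/1 matrices A0, C0 make B a
      permuted copy of D, the i-th row of whose inverse has product
      w_r0 / D_ii ≠ 0 with w. *)

(* Polynomial functions of the first k coordinates of x : nat -> R, defined
   by recursion on k: a polynomial in x_0..x_k is a polynomial in x_k whose
   coefficients are polynomials in x_0..x_{k-1}.  This presentation is the
   one the inductive probabilistic argument consumes. *)
Section PolynomialFunctions.
Variable R : comPzRingType.

Fixpoint polyfun (k : nat) (f : (nat -> R) -> R) : Prop :=
  match k with
  | 0 => exists c, forall x, f x = c
  | k'.+1 => exists d (q : nat -> (nat -> R) -> R),
      (forall j, polyfun k' (q j)) /\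
      forall x, f x = \sum_(j < d) q j x * x k' ^+ j
  end.

Lemma polyfun_ext k f g : (forall x, f x = g x) -> polyfun k f -> polyfun k g.
Proof.
case: k => [|k] fg.
  by move=> [c Hc]; exists c => x; rewrite -fg.
by move=> [d [q [Hq E]]]; exists d, q; split => // x; rewrite -fg.
Qed.

Lemma polyfun_cst k c : polyfun k (fun _ => c).
Proof.
elim: k => [|k IH]; first by exists c.
by exists 1%N, (fun _ _ => c); split => // x; rewrite big_ord1 expr0 mulr1.
Qed.

Lemma polyfun_term k h e : polyfun k h -> polyfun k.+1 (fun x => h x * x k ^+ e).
Proof.
move=> Hh; exists e.+1, (fun j => if j == e then h else (fun _ => 0)); split.
  by move=> j; case: (j == e) => //; exact: polyfun_cst.
move=> x; rewrite big_ord_recr /= eqxx big1 ?add0r // => i _.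
by rewrite (ltn_eqF (ltn_ord i)) mul0r.
Qed.

Lemma polyfun_var k i : (i < k)%N -> polyfun k (fun x => x i).
Proof.
elim: k => [//|k IH]; rewrite ltnS leq_eqVlt => /orP[/eqP->|ik].
  apply: (@polyfun_ext _ (fun x => 1 * x k ^+ 1)); first by move=> x; rewrite mul1r.
  exact/polyfun_term/polyfun_cst.
exists 1%N, (fun _ x => x i); split => [j|x]; first exact: IH.
by rewrite big_ord1 expr0 mulr1.
Qed.

Lemma sum_pad d d' (F y : nat -> R) : (d <= d')%N ->
  \sum_(j < d') (if (j < d)%N then F j else 0) * y j = \sum_(j < d) F j * y j.
Proof.
move=> dd'; rewrite (big_ord_widen d' (fun j => F j * y j) dd') [RHS]big_mkcond.
by apply: eq_bigr => j _; case: ifP => //; rewrite mul0r.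
Qed.

Lemma polyfun_add k f g : polyfun k f -> polyfun k g -> polyfun k (fun x => f x + g x).
Proof.
elim: k f g => [|k IH] f g.
  by move=> [c1 E1] [c2 E2]; exists (c1 + c2) => x; rewrite E1 E2.
move=> [d1 [q1 [H1 E1]]] [d2 [q2 [H2 E2]]].
pose pad d (q : nat -> (nat -> R) -> R) j x := if (j < d)%N then q j x else 0.
have pad_poly d q : (forall j, polyfun k (q j)) -> forall j, polyfun k (pad d q j).
  move=> Hq j; case: (ltnP j d) => jd.
    by apply: (polyfun_ext _ (Hq j)) => x; rewrite /pad jd.
  by apply: (polyfun_ext _ (polyfun_cst k 0)) => x; rewrite /pad ltnNge jd.
exists (maxn d1 d2), (fun j x => pad d1 q1 j x + pad d2 q2 j x); split.
  by move=> j; apply: IH; apply: pad_poly.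
move=> x; rewrite E1 E2 (eq_bigr _ (fun j _ => mulrDl _ _ _)) big_split /=.
rewrite /pad (sum_pad (fun j => q1 j x) (fun j => x k ^+ j)) ?leq_maxl //.
by rewrite (sum_pad (fun j => q2 j x) (fun j => x k ^+ j)) ?leq_maxr.
Qed.

Lemma polyfun_sum k (I : Type) (r : seq I) (P : pred I) (F : I -> (nat -> R) -> R) :
  (forall i, polyfun k (F i)) -> polyfun k (fun x => \sum_(i <- r | P i) F i x).
Proof.
move=> HF; elim: r => [|a r IH].
  by apply: (polyfun_ext _ (polyfun_cst k 0)) => x; rewrite big_nil.
case Pa: (P a); last by apply: (polyfun_ext _ IH) => x; rewrite big_cons Pa.
by apply: (polyfun_ext _ (polyfun_add (HF a) IH)) => x; rewrite big_cons Pa.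
Qed.

Lemma polyfun_mul k f g : polyfun k f -> polyfun k g -> polyfun k (fun x => f x * g x).
Proof.
elim: k f g => [|k IH] f g.
  by move=> [c1 E1] [c2 E2]; exists (c1 * c2) => x; rewrite E1 E2.
move=> [d1 [q1 [H1 E1]]] [d2 [q2 [H2 E2]]].
apply: (@polyfun_ext _ (fun x => \sum_(a < d1) \sum_(b < d2)
   (q1 a x * q2 b x) * x k ^+ (a + b))).
  move=> x; rewrite E1 E2 mulr_suml; apply: eq_bigr => a _.
  by rewrite mulr_sumr; apply: eq_bigr => b _; rewrite exprD mulrACA.
apply: polyfun_sum => a; apply: polyfun_sum => b.
apply: polyfun_term; exact: IH (H1 a) (H2 b).
Qed.

Lemma polyfun_prod k (I : Type) (r : seq I) (P : pred I) (F : I -> (nat -> R) -> R) :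
  (forall i, polyfun k (F i)) -> polyfun k (fun x => \prod_(i <- r | P i) F i x).
Proof.
move=> HF; elim: r => [|a r IH].
  by apply: (polyfun_ext _ (polyfun_cst k 1)) => x; rewrite big_nil.
case Pa: (P a); last by apply: (polyfun_ext _ IH) => x; rewrite big_cons Pa.
by apply: (polyfun_ext _ (polyfun_mul (HF a) IH)) => x; rewrite big_cons Pa.
Qed.

Lemma polyfun_det k p (M : (nat -> R) -> 'M[R]_p) :
  (forall i j, polyfun k (fun x => M x i j)) -> polyfun k (fun x => \det (M x)).
Proof.
move=> HM; apply: polyfun_sum => s; apply: polyfun_mul; first exact: polyfun_cst.
by apply: polyfun_prod => i; exact: HM.
Qed.

Lemma polyfun_adj k p (M : (nat -> R) -> 'M[R]_p) i j :
  (forall i j, polyfun k (fun x => M x i j)) -> polyfun k (fun x => \adj (M x) i j).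
Proof.
move=> HM; apply: (@polyfun_ext _ (fun x => (-1) ^+ (j + i) *
    \det (row' j (col' i (M x))))); first by move=> x; rewrite mxE.
apply: polyfun_mul; first exact: polyfun_cst.
by apply: polyfun_det => a b; apply: (polyfun_ext _ (HM _ _)) => x; rewrite !mxE.
Qed.

End PolynomialFunctions.
Arguments polyfun {R}.

Lemma measurable_polyfun (R : realType) d (T : measurableType d) k f
    (X : nat -> T -> R) :
  polyfun k f -> (forall i, (i < k)%N -> measurable_fun setT (X i)) ->
  measurable_fun setT (fun t => f (fun i => X i t)).
Proof.
elim: k f => [|k IH] f.
  by move=> [c Hc] _; rewrite (funext (fun t => Hc _)); exact: measurable_cst.
move=> [e [q [Hq E]]] mX; rewrite (funext (fun t => E _)).
apply: measurable_sum => j; apply: measurable_realfun.measurable_funM.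
  by apply: IH; [exact: Hq | move=> i ik; apply: mX; exact: ltnW].
exact/measurable_realfun.measurable_funX/mX.
Qed.

Lemma measurable_zero_set (R : realType) d (T : measurableType d) (g : T -> R) :
  measurable_fun setT g -> measurable [set t | g t = 0].
Proof.
by move=> mg; rewrite -[X in measurable X]setTI; exact: mg (measurable_set1 0).
Qed.

Lemma measurable_nonzero_set (R : realType) d (T : measurableType d) (g : T -> R) :
  measurable_fun setT g -> measurable [set t | g t != 0].
Proof.
move=> mg; have -> : [set t | g t != 0] = setT `&` g @^-1` (~` [set 0]).
  by apply/seteqP; split => t /=; [move=> h; split => //; apply/eqP|case=> _ /eqP].
exact: mg (measurableC (measurable_set1 0)).
Qed.

Lemma atomless_finite_negligible (R : realType) (mu : {measure set R -> \bar R})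
    (s : seq R) :
  (forall z, mu [set z] = 0%E) -> mu.-negligible [set z | z \in s].
Proof.
move=> atomless; elim: s => [|a s IH].
  by apply: (negligibleS _ (negligible_set0 mu)) => z.
have -> : [set z | z \in a :: s] = [set a] `|` [set z | z \in s].
  apply/seteqP; split => z /=; rewrite in_cons.
    by case/orP => [/eqP ->|]; [left|right].
  by case => [->|->]; rewrite ?eqxx ?orbT.
apply: negligibleU => //.
by apply/negligibleP; [exact: measurable_set1|exact: atomless].
Qed.

(* One step of the induction: a real random variable Z, independent of a
   pi-system G of events and with an atomless law. *)
Section IndependentExtension.
Variables (R : realType) (d : measure_display) (T : measurableType d)
  (P : probability T R).
Variable G : set (set T).
Hypothesis G_measurable : forall A, G A -> measurable A.
Hypothesis G_setI : setI_closed G.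
Variable Z : T -> R.
Hypothesis mZ : measurable_fun setT Z.
Hypothesis Z_indep : forall A B, G A -> measurable B ->
  P (A `&` Z @^-1` B) = (P A * P (Z @^-1` B))%E.
Hypothesis Z_atomless : forall z, P (Z @^-1` [set z]) = 0%E.

Local Notation TG := (g_sigma_algebraType G).

Lemma g_sigma_measurable A : <<s G >> A -> measurable A.
Proof.
by apply: smallest_sub; [exact: sigma_algebra_measurable|exact: G_measurable].
Qed.

Lemma indep_g_sigma A B : <<s G >> A -> measurable B ->
  P (A `&` Z @^-1` B) = (P A * P (Z @^-1` B))%E.
Proof.
move=> sA mB; have mZB : measurable (Z @^-1` B).
  by rewrite -[X in measurable X]setTI; exact: mZ.
have finZB : P (Z @^-1` B) \is a fin_num by rewrite fin_num_measure.
apply: (@dynkin_induction _ TG G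
  (fun A => P (A `&` Z @^-1` B) = (P A * P (Z @^-1` B))%E)) => //.
- by rewrite setTI probability_setT mul1e.
- by move=> C GC; exact: Z_indep.
- move=> S /g_sigma_measurable mS HS.
  have finS : P S \is a fin_num by rewrite fin_num_measure.
  have -> : P (~` S `&` Z @^-1` B) = (P (Z @^-1` B) - P (S `&` Z @^-1` B))%E.
    rewrite setIC -setDE setIC; apply: measureD => //.
    by rewrite (le_lt_trans (probability_le1 _ _)) ?ltry.
  rewrite probability_setC // HS -(fineK finS) -(fineK finZB).
  by rewrite -EFinM -EFinB -EFinB -EFinM mulrBl mul1r.
- move=> F mF tF HF.
  have mF' i : measurable (F i : set T) by exact: g_sigma_measurable (mF i).
  have mFZ i : [set: nat] i -> measurable ((F i : set T) `&` Z @^-1` B).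
    by move=> _; exact: measurableI (mF' i) mZB.
  have tFZ := @trivIset_setIr T nat setT F (fun _ => Z @^-1` B) tF.
  rewrite setI_bigcupl (measure_bigcup P _ _ mFZ tFZ).
  rewrite (measure_bigcup P _ _ (fun i _ => mF' i) tF) (eq_eseriesr (fun i _ => HF i)).
  rewrite -(fineK finZB) (eq_eseriesr (fun i _ => muleC (P (F i)) _)).
  by rewrite nneseriesZl 1?muleC // => i _; exact: measure_ge0.
Qed.

(* The identity of T, seen as a measurable map to the coarser space TG: the
   information carried by G. *)
Definition to_TG (t : T) : TG := t.

Lemma measurable_to_TG : measurable_fun setT to_TG.
Proof. by move=> _ A mA; rewrite setTI; exact: g_sigma_measurable. Qed.

Let lawG := distribution P (mfun_Sub (mem_set measurable_to_TG)).
Let lawZ := distribution P (mfun_Sub (mem_set mZ)).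
Let joint_law := distribution P
  (mfun_Sub (mem_set (measurable_fun_pair measurable_to_TG mZ))).

Lemma joint_law_product S : measurable S -> joint_law S = (lawG \x lawZ)%E S.
Proof.
by move=> mS; symmetry; apply: product_measure_unique => // A B mA mB;
  exact: indep_g_sigma.
Qed.

(* By Fubini over the product law, the event has probability the average
   over the G-information of the Z-law of the (finite) root set of the
   polynomial with frozen coefficients, which is 0. *)
Lemma polynomial_in_Z_null (c : nat -> T -> R) (e : nat) (j0 : 'I_e) :
  (forall j, measurable_fun (setT : set TG) (c j : TG -> R)) ->
  P.-negligible [set t | \sum_(j < e) c j t * Z t ^+ j = 0 /\ c j0 t != 0].
Proof.
move=> mc.
pose S : set (TG * R) :=
  [set p | \sum_(j < e) c j p.1 * p.2 ^+ j = 0 /\ c j0 p.1 != 0].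
have mS : measurable S.
  apply: measurableI; [apply: measurable_zero_set|apply: measurable_nonzero_set].
    apply: measurable_sum => j; apply: measurable_realfun.measurable_funM.
      exact: measurableT_comp (mc j) measurable_fst.
    exact: measurable_realfun.measurable_funX measurable_snd.
  exact: measurableT_comp (mc j0) measurable_fst.
have mpreS : measurable ((fun t => (to_TG t, Z t)) @^-1` S).
  by rewrite -[X in measurable X]setTI;
    exact: measurable_fun_pair measurable_to_TG mZ measurableT _ mS.
apply/(negligibleP P mpreS); change (joint_law S = 0%E).
rewrite joint_law_product // /product_measure1.
apply: integral0_eq => x _ /=.
have [cx|cx] := eqVneq (c j0 x) 0.
  rewrite (_ : xsection S x = set0) ?measure0 //.
  apply/seteqP; split => // z.
  by rewrite /xsection /= inE => -[_]; rewrite cx eqxx.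
pose p : {poly R} := \poly_(j < e) c j x.
have p0 : p != 0.
  apply: contra_neq cx => /(congr1 (fun q : {poly R} => q`_j0)).
  by rewrite coef_poly ltn_ord coef0.
apply: measure_negligible; first exact: measurable_xsection.
have rootsZ_null : lawZ.-negligible [set z | z \in rootsR p].
  exact: atomless_finite_negligible.
apply: negligibleS rootsZ_null.
move=> z; rewrite /xsection /= inE => -[hz _].
by rewrite -(roots_on_rootsR p0) /root /p horner_poly hz eqxx andbT.
Qed.

End IndependentExtension.

Section PrefixIndependence.
Variables (R : realType) (d : measure_display) (T : measurableType d)
  (P : probability T R).
Variables (X : nat -> T -> R) (N : nat).
Hypothesis mX : forall i, measurable_fun setT (X i).
Hypothesis X_indep : forall k, (k <= N)%N -> forall B : nat -> set R,
  (forall i, measurable (B i)) -> (forall i, (k <= i)%N -> B i = setT) ->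
  P (\bigcap_i X i @^-1` B i) = (\prod_(i < k) P (X i @^-1` B i))%E.
Hypothesis X_atomless :
  forall i, (i < N)%N -> forall z, P (X i @^-1` [set z]) = 0%E.

Definition prefix_events k : set (set T) := [set A | exists B : nat -> set R,
  [/\ (forall i, measurable (B i)), (forall i, (k <= i)%N -> B i = setT)
    & A = \bigcap_i X i @^-1` B i]].

Lemma prefix_events_measurable k A : prefix_events k A -> measurable A.
Proof.
move=> [B [mB _ ->]]; apply: bigcapT_measurable => i.
by rewrite -[Y in measurable Y]setTI; exact: mX.
Qed.

Lemma prefix_events_setI k : setI_closed (prefix_events k).
Proof.
move=> _ _ [B [mB hB ->]] [B' [mB' hB' ->]].
exists (fun i => B i `&` B' i); split.
- by move=> i; exact: measurableI.
- by move=> i ki; rewrite hB // hB' // setIid.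
- apply/seteqP; split => t /=.
    by move=> [h1 h2] i _; split; [exact: h1|exact: h2].
  by move=> h; split => i _; have [] := h i I.
Qed.

Lemma prefix_events_indep k : (k < N)%N -> forall A B, prefix_events k A ->
  measurable B -> P (A `&` X k @^-1` B) = (P A * P (X k @^-1` B))%E.
Proof.
move=> kN _ B [Bs [mBs hBs ->]] mB.
pose B' i := if i == k then B else Bs i.
have -> : (\bigcap_i X i @^-1` Bs i) `&` X k @^-1` B = \bigcap_i X i @^-1` B' i.
  apply/seteqP; split => t /=.
    by move=> [h1 h2] i _; rewrite /B'; case: eqP => [->|_] //; exact: h1.
  move=> h; split; last by have := h k I; rewrite /B' eqxx.
  move=> i _; have [->|ik] := eqVneq i k; first by rewrite hBs.
  by have := h i I; rewrite /B' (negbTE ik).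
have mB' i : measurable (B' i) by rewrite /B'; case: eqP.
have hB' i : (k.+1 <= i)%N -> B' i = setT.
  by move=> ki; rewrite /B' gtn_eqF // hBs // ltnW.
rewrite (X_indep kN mB' hB') big_ord_recr /= (X_indep (ltnW kN) mBs hBs).
rewrite /B' eqxx; congr (_ * _)%E; apply: eq_bigr => i _.
by rewrite (ltn_eqF (ltn_ord i)).
Qed.

Lemma measurable_prefix k i : (i < k)%N ->
  measurable_fun (setT : set (g_sigma_algebraType (prefix_events k)))
                 (X i : g_sigma_algebraType (prefix_events k) -> R).
Proof.
move=> ik _ Y mY; rewrite setTI; apply: sub_sigma_algebra.
exists (fun j => if j == i then Y else setT); split.
- by move=> j; case: eqP.
- by move=> j kj; rewrite gtn_eqF // (leq_trans ik).
- apply/seteqP; split => t /=; first by move=> h j _; case: eqP => [->|].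
  by move=> h; have := h i I; rewrite eqxx.
Qed.

Lemma polyfun_null k f x0 : (k <= N)%N -> polyfun k f -> f x0 != 0 ->
  P.-negligible [set t | f (fun i => X i t) = 0].
Proof.
elim: k f x0 => [|k IH] f x0 kN.
  move=> [c Hc] fx0; apply: negligibleS (negligible_set0 P) => t /=.
  by rewrite !Hc => c0; move: fx0; rewrite Hc c0 eqxx.
move=> [e [q [Hq E]]] fx0.
have /existsP[j0 qj0] : [exists j0 : 'I_e, q j0 x0 != 0].
  apply: contraNT fx0 => /existsPn qx0; rewrite E big1 // => j _.
  by move/negbNE/eqP: (qx0 j) => ->; rewrite mul0r.
have lead_null := IH (q j0) x0 (ltnW kN) (Hq j0) qj0.
have rest_null := @polynomial_in_Z_null _ _ _ P (prefix_events k)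
  (@prefix_events_measurable k) (@prefix_events_setI k) _ (mX k)
  (prefix_events_indep kN) (X_atomless kN) (fun j t => q j (fun i => X i t)) _ j0
  (fun j => measurable_polyfun (Hq j) (fun i ik => measurable_prefix ik)).
apply: negligibleS (negligibleU lead_null rest_null) => t /=; rewrite E => ft0.
by have [qt0|qt0] := eqVneq (q j0 (fun i => X i t)) 0; [left|right].
Qed.

End PrefixIndependence.

(* The coordinates of a vector indexed by a finite type, listed along the
   enumeration of that type (and padded with 0). *)
Definition seq_of_family (J : finType) (R : pzRingType) (y : J -> R) (j : nat) : R :=
  if insub j : option 'I_#|J| is Some o then y (enum_val o) else 0.

Lemma seq_of_familyE (J : finType) (R : pzRingType) (y : J -> R) e :
  seq_of_family y (enum_rank e) = y e.
Proof. by rewrite /seq_of_family valK enum_rankK. Qed.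

Section FiniteFamily.
Variables (R : realType) (d : measure_display) (T : measurableType d)
  (P : probability T R).
Variables (J : finType) (Y : J -> T -> R).
Hypothesis mY : forall e, measurable_fun setT (Y e).
Hypothesis Y_indep : mutually_independent P Y.
Hypothesis Y_atomless : forall e, continuous_law P (Y e).

Let X j t := seq_of_family (fun e => Y e t) j.

Lemma measurable_seq_of_family j : measurable_fun setT (X j).
Proof.
rewrite /X /seq_of_family; case: insubP => [u _ _ | _]; first exact: mY.
exact: measurable_cst.
Qed.

Lemma seq_of_family_atomless j : (j < #|J|)%N ->
  forall z, P (X j @^-1` [set z]) = 0%E.
Proof. by move=> jJ z; rewrite /X /seq_of_family insubT; exact: Y_atomless. Qed.

Lemma seq_of_family_prefix_indep k : (k <= #|J|)%N -> forall B : nat -> set R,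
  (forall i, measurable (B i)) -> (forall i, (k <= i)%N -> B i = setT) ->
  P (\bigcap_i X i @^-1` B i) = (\prod_(i < k) P (X i @^-1` B i))%E.
Proof.
move=> kJ B mB hB.
have -> : \bigcap_i X i @^-1` B i = \bigcap_(e in [set: J]) Y e @^-1` B (enum_rank e).
  apply/seteqP; split => t /= h.
    by move=> e _; have := h (enum_rank e) I; rewrite /X /= seq_of_familyE.
  move=> j _; rewrite /X /seq_of_family; case: insubP => [u _ <-|jJ].
    by have := h (enum_val u) I; rewrite enum_valK.
  by rewrite hB // (leq_trans kJ) // leqNgt.
rewrite Y_indep // (reindex (@enum_val J predT)) /=; last first.
  by exists enum_rank => o _; [rewrite enum_valK|rewrite enum_rankK].
rewrite (big_ord_widen #|J| (fun i => P (X i @^-1` B i)) kJ) [RHS]big_mkcond /=.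
apply: eq_bigr => o _; rewrite enum_valK /X /seq_of_family valK.
case: ifP => // /negbT; rewrite -leqNgt => ko.
by rewrite hB // preimage_setT probability_setT.
Qed.

Lemma polyfun_ae_nonzero f : polyfun #|J| f -> (exists x0, f x0 != 0) ->
  P.-negligible [set t | f (seq_of_family (fun e => Y e t)) = 0].
Proof.
move=> Pf [x0 fx0].
exact: polyfun_null measurable_seq_of_family seq_of_family_prefix_indep
  seq_of_family_atomless _ _ _ (leqnn _) Pf fx0.
Qed.

End FiniteFamily.

Lemma negligible_bigcup_fin (R : realType) d (T : measurableType d)
    (mu : {measure set T -> \bar R}) (J : finType) (F : J -> set T) :
  (forall e, mu.-negligible (F e)) -> mu.-negligible (\bigcup_(e in [set: J]) F e).
Proof.
move=> F0.
pose G j := if insub j : option 'I_#|J| is Some o then F (enum_val o) else set0.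
apply: (@negligibleS _ _ _ _ (\bigcup_j G j)).
  by move=> t [e _ Fet]; exists (enum_rank e) => //; rewrite /G valK enum_rankK.
apply: negligible_bigcup => j; rewrite /G; case: insubP => [u _ _ | _].
  exact: F0.
exact: negligible_set0.
Qed.

Lemma invmx_row_dot (R : comUnitRingType) p (B : 'M[R]_p) (w : 'cV[R]_p) i :
  B \in unitmx ->
  \sum_k invmx B i k * w k 0 = (\det B)^-1 * \sum_k \adj B i k * w k 0.
Proof.
move=> Bu; rewrite /invmx Bu mulr_sumr; apply: eq_bigr => k _.
by rewrite mxE mulrA.
Qed.

Lemma unit_row_dot_nonzero (F : fieldType) p (B : 'M[F]_p) (w : 'cV[F]_p) :
  \det B != 0 -> (forall i, \sum_k \adj B i k * w k 0 != 0) ->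
  B \in unitmx /\ forall i, \sum_k invmx B i k * w k 0 != 0.
Proof.
move=> detB dotB; have Bu : B \in unitmx by rewrite unitmxE unitfE.
by split => // i; rewrite invmx_row_dot // mulf_neq0 ?invr_eq0.
Qed.

Lemma kr_pair_inj n m : injective (@kr_pair n m).
Proof. by move=> r r' /enum_val_inj /cast_ord_inj. Qed.

(* The witness: 0/1 factors A0, C0 built from a permutation s make
   (A0 D) ⊙ C0 the permuted diagonal matrix with entries D_kk at (s k, k). *)
Section PermutationPoint.
Variables (F : fieldType) (n m : nat) (D : 'M[F]_(n * m)).
Hypothesis D_diag : is_diag_mx D.
Hypothesis D_nz : forall i, D i i != 0.
Variable s : {perm 'I_(n * m)}.

Definition perm_factor_A : 'M[F]_(n, n * m) :=
  \matrix_(a, k) ((a == (kr_pair (s k)).1)%:R).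
Definition perm_factor_C : 'M[F]_(m, n * m) :=
  \matrix_(b, k) ((b == (kr_pair (s k)).2)%:R).

Local Notation B0 := (khatri_rao (perm_factor_A *m D) perm_factor_C).

Lemma perm_pointE r k : B0 r k = D k k * (r == s k)%:R.
Proof.
rewrite !mxE (bigD1 k) //= big1 ?addr0 => [|l lk]; last first.
  by move/is_diag_mxP: D_diag => -> //; rewrite mulr0.
rewrite !mxE mulrAC mulrC -natrM mulnb -xpair_eqE -!surjective_pairing.
by rewrite (inj_eq (@kr_pair_inj n m)).
Qed.

Definition perm_point_inv : 'M[F]_(n * m) := \matrix_(k, r) ((r == s k)%:R / D k k).

Lemma perm_point_invP : B0 \in unitmx /\ invmx B0 = perm_point_inv.
Proof.
have left_inv : perm_point_inv *m B0 = 1%:M.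
  apply/matrixP => k k'; rewrite !mxE (bigD1 (s k)) //= big1 ?addr0; last first.
    by move=> r /negbTE rk; rewrite !mxE rk mul0r mul0r.
  rewrite perm_pointE !mxE eqxx (inj_eq perm_inj).
  by have [<-|] := eqVneq k k'; [rewrite mul1r mulr1 mulVf|rewrite !mulr0].
have [Bu B0u] := mulmx1_unit left_inv.
split => //; rewrite -[invmx B0]mulmx1 -(mulmx1C left_inv) mulmxA.
by rewrite mulVmx // mul1mx.
Qed.

Lemma perm_point_row_dot (w : 'cV[F]_(n * m)) i :
  \sum_k invmx B0 i k * w k 0 = w (s i) 0 / D i i.
Proof.
rewrite (proj2 perm_point_invP) (bigD1 (s i)) //= big1 ?addr0 => [|k /negbTE ki].
  by rewrite mxE eqxx mul1r mulrC.
by rewrite mxE ki mul0r mul0r.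
Qed.

End PermutationPoint.

(* The random matrix B as a function of the vector x of all entries of A and
   C, indexed by the finite type kr_entries through its enumeration. *)
Definition kr_entries (n m : nat) : finType :=
  (('I_n * 'I_(n * m)) + ('I_m * 'I_(n * m)))%type.

Section KhatriRaoDesign.
Variables (R : realType) (n m : nat) (D : 'M[R]_(n * m)) (w : 'cV[R]_(n * m)).

Local Notation coord a := (enum_rank (a : kr_entries n m)).

Definition kr_design (x : nat -> R) : 'M[R]_(n * m) :=
  khatri_rao ((\matrix_(a, k) x (coord (inl (a, k)))) *m D)
             (\matrix_(b, k) x (coord (inr (b, k)))).

Definition kr_cofactor_dot (i : 'I_(n * m)) (x : nat -> R) : R :=
  \sum_k \adj (kr_design x) i k * w k 0.

Lemma polyfun_kr_design r k : polyfun #|kr_entries n m| (fun x => kr_design x r k).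
Proof.
apply: (@polyfun_ext _ _ (fun x => (\sum_l x (coord (inl ((kr_pair r).1, l))) * D l k)
    * x (coord (inr ((kr_pair r).2, k))))).
  by move=> x; rewrite !mxE; congr (_ * _); apply: eq_bigr => l _; rewrite mxE.
apply: polyfun_mul; last exact: polyfun_var.
by apply: polyfun_sum => l; apply: polyfun_mul; [exact: polyfun_var|exact: polyfun_cst].
Qed.

Lemma polyfun_kr_det : polyfun #|kr_entries n m| (fun x => \det (kr_design x)).
Proof. exact/polyfun_det/polyfun_kr_design. Qed.

Lemma polyfun_kr_cofactor_dot i : polyfun #|kr_entries n m| (kr_cofactor_dot i).
Proof.
apply: polyfun_sum => k; apply: polyfun_mul; last exact: polyfun_cst.
exact/polyfun_adj/polyfun_kr_design.
Qed.

Hypothesis D_diag : is_diag_mx D.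
Hypothesis D_nz : forall i, D i i != 0.
Hypothesis w_nz : w != 0.

(* Both polynomials are nonzero at the permutation point for tperm i r0,
   where w_r0 != 0. *)
Lemma kr_design_point i :
  exists x, \det (kr_design x) != 0 /\ kr_cofactor_dot i x != 0.
Proof.
have /existsP[r0 wr0] : [exists r, w r 0 != 0].
  apply: contraNT w_nz => /existsPn w0; apply/eqP/matrixP => r c.
  by rewrite ord1 mxE; apply/eqP/negbNE.
pose s := tperm i r0.
pose x0 := seq_of_family (fun e : kr_entries n m =>
  match e with
  | inl p => perm_factor_A R s p.1 p.2
  | inr p => perm_factor_C R s p.1 p.2
  end).
have B0E : kr_design x0 = khatri_rao (perm_factor_A R s *m D) (perm_factor_C R s).
  congr (khatri_rao (_ *m D) _);
  by apply/matrixP => a k; rewrite mxE /x0 seq_of_familyE.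
have [B0u _] := perm_point_invP D_diag D_nz s.
have detB0 : \det (kr_design x0) != 0 by rewrite B0E -unitfE -unitmxE.
have := perm_point_row_dot D_diag D_nz s w i.
rewrite -B0E invmx_row_dot ?B0E // tpermL -B0E => dot_eq.
exists x0; split => //.
have -> : kr_cofactor_dot i x0 = \det (kr_design x0) * (w r0 0 / D i i).
  by rewrite -dot_eq mulVKf.
by rewrite !mulf_neq0 ?invr_eq0.
Qed.

End KhatriRaoDesign.

Theorem lemma4p2 (d : measure_display) (T : measurableType d) (R : realType)
  (P : probability T R) (n m : nat) (hn : (0 < n)%N) (hm : (0 < m)%N)
  (Aent : 'I_n -> 'I_(n * m) -> T -> R)
  (Cent : 'I_m -> 'I_(n * m) -> T -> R)
  (hAmeas : forall i k, measurable_fun setT (Aent i k))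
  (hCmeas : forall j k, measurable_fun setT (Cent j k))
  (hindep : mutually_independent P
     (fun e : ('I_n * 'I_(n * m)) + ('I_m * 'I_(n * m)) =>
        match e with inl p => Aent p.1 p.2 | inr p => Cent p.1 p.2 end))
  (hAiid : forall i k i' k', same_law P (Aent i k) (Aent i' k'))
  (hCiid : forall j k j' k', same_law P (Cent j k) (Cent j' k'))
  (hAcont : forall i k, continuous_law P (Aent i k))
  (hCcont : forall j k, continuous_law P (Cent j k))
  (D : 'M[R]_(n * m)) (hDdiag : is_diag_mx D) (hDnz : forall i, D i i != 0)
  (w : 'cV[R]_(n * m)) (hw : w != 0) :
  {ae P, forall t : T,
    let A := \matrix_(i < n, k < n * m) Aent i k t in
    let C := \matrix_(j < m, k < n * m) Cent j k t in
    let B := khatri_rao (A *m D) C in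
    B \in unitmx /\
    forall i : 'I_(n * m), \sum_(k < n * m) invmx B i k * w k 0 != 0}.
Proof.
pose Y (e : kr_entries n m) :=
  match e with inl p => Aent p.1 p.2 | inr p => Cent p.1 p.2 end.
have mY e : measurable_fun setT (Y e) by case: e => -[].
have Y_atomless e : continuous_law P (Y e) by case: e => -[].
pose x t := seq_of_family (fun e => Y e t).
have BE t : khatri_rao ((\matrix_(i < n, k < n * m) Aent i k t) *m D)
    (\matrix_(j < m, k < n * m) Cent j k t) = kr_design D (x t).
  congr (khatri_rao (_ *m D) _);
  by apply/matrixP => a k; rewrite !mxE /x seq_of_familyE.
have witness i := kr_design_point hDdiag hDnz hw i.
have det_null : P.-negligible [set t | \det (kr_design D (x t)) = 0].
  apply: polyfun_ae_nonzero mY hindep Y_atomless _ (polyfun_kr_det D) _.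
  have nm : (0 < n * m)%N by rewrite muln_gt0 hn hm.
  have [x0 [detx0 _]] := witness (Ordinal nm).
  by exists x0.
have dot_null : P.-negligible (\bigcup_(i in [set: 'I_(n * m)])
    [set t | kr_cofactor_dot D w i (x t) = 0]).
  apply: negligible_bigcup_fin => i.
  apply: polyfun_ae_nonzero mY hindep Y_atomless _ (polyfun_kr_cofactor_dot D w i) _.
  by have [x0 [_ dotx0]] := witness i; exists x0.
apply: negligibleS (negligibleU det_null dot_null) => t /= not_generic.
apply: contrapT => /not_orP[/eqP detB dotB]; apply: not_generic.
rewrite BE; apply: unit_row_dot_nonzero => // i.
by apply/eqP => dot0; apply: dotB; exists i.
Qed.
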